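(* Let $K$ be an idempotent semifield and $L$ a finite extension of $K$. Then $L$ is archimedean over $K$, i.e. for every $x\in L$ there exists $y\in K$ with $x+y=y$.
   Context: A semifield is a commutative semiring (both operations commutative monoids, distributive law) in which every nonzero element is a unit; it is idempotent if $x+x=x$ for all $x$. An extension of $K$ is a semifield $L$ with an injective homomorphism $K\to L$ (used to identify $K$ with its image); it is finite if $L$ is a finitely generated $K$-semimodule. *)

From HB Require Import structures.
From mathcomp Require Import all_boot all_order all_algebra.
Set Implicit Arguments. Unset Strict Implicit. Unset Printing Implicit Defensive.
Import GRing.Theory.
Local Open Scope ring_scope.

Definition is_semifield (K : comPzSemiRingType) : Prop :=
  forall x : K, x != 0 -> exists y : K, x * y = 1.

Definition is_idempotent (K : comPzSemiRingType) : Prop :=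
  forall x : K, x + x = x.

(* L is a finitely generated K-semimodule, the action being k . x := f k * x. *)
Definition finite_ext (K L : comPzSemiRingType) (f : {rmorphism K -> L}) : Prop :=
  exists s : seq L, forall x : L, exists c : nat -> K,
    x = \sum_(i < size s) f (c i) * s`_i.

Definition archimedean_over (K L : comPzSemiRingType) (f : {rmorphism K -> L}) : Prop :=
  forall x : L, exists y : K, x + f y = f y.

From HB Require Import structures.
From mathcomp Require Import all_boot all_order all_algebra.
Set Implicit Arguments. Unset Strict Implicit. Unset Printing Implicit Defensive.
Import GRing.Theory.
Local Open Scope ring_scope.

(* Idempotency passes from K to L because 1 + 1 = 1 there, and then a + b = b
   is an order compatible with sums and products.  If s generates L over K and
   u is the sum of the generators, every element x = sum f(c_i) s_i lies below
   f(sum c_i) u.  Applied to x = u^2 this gives u^2 <= f(k) u, and dividing by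
   u (L is a semifield) gives u <= f(k); hence every x lies below some f(k'). *)

Section IdempotentOrder.

Variable R : comPzSemiRingType.
Hypothesis add11 : (1 : R) + 1 = 1.

Definition idem_le (a b : R) := a + b = b.

Lemma addrii (x : R) : x + x = x.
Proof. by rewrite -{1 2}(mulr1 x) -mulrDr add11 mulr1. Qed.

Lemma idem_le_trans (a b c : R) : idem_le a b -> idem_le b c -> idem_le a c.
Proof. by rewrite /idem_le => hab hbc; rewrite -hbc addrA hab. Qed.

Lemma idem_le_addr (a b : R) : idem_le a (a + b).
Proof. by rewrite /idem_le addrA addrii. Qed.

Lemma idem_le0r (a : R) : idem_le 0 a.
Proof. exact: add0r. Qed.

Lemma idem_leM2l (c a b : R) : idem_le a b -> idem_le (c * a) (c * b).
Proof. by rewrite /idem_le => h; rewrite -mulrDr h. Qed.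

Lemma idem_le_sum n (F G : 'I_n -> R) :
  (forall i, idem_le (F i) (G i)) ->
  idem_le (\sum_(i < n) F i) (\sum_(i < n) G i).
Proof.
move=> hFG; apply: (big_ind2 idem_le); [exact: add0r | | by []].
by move=> x1 x2 y1 y2 h1 h2; rewrite /idem_le -[in RHS]h1 -[in RHS]h2 addrACA.
Qed.

Lemma idem_le_bigr n (F : 'I_n -> R) i : idem_le (F i) (\sum_(j < n) F j).
Proof. by rewrite (bigD1 i) //=; apply: idem_le_addr. Qed.

Lemma idem_le_of_sqr (u b : R) :
  (u = 0 \/ exists v, u * v = 1) -> idem_le (u * u) (b * u) -> idem_le u b.
Proof.
case=> [-> _ | [v uv] h]; first exact: idem_le0r.
move: (idem_leM2l v h); rewrite /idem_le.
by rewrite ![v * _]mulrC -!mulrA uv !mulr1.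
Qed.

End IdempotentOrder.

Section FiniteExtension.

Variables (K L : comPzSemiRingType) (f : {rmorphism K -> L}).
Hypothesis idK : is_idempotent K.

Lemma add11_ext : (1 : L) + 1 = 1.
Proof. by rewrite -(rmorph1 f) -rmorphD idK. Qed.

Variable s : seq L.

Let u := \sum_(i < size s) s`_i.

Lemma idem_le_span (c : nat -> K) :
  idem_le (\sum_(i < size s) f (c i) * s`_i) (f (\sum_(i < size s) c i) * u).
Proof.
rewrite rmorph_sum mulr_suml; apply: idem_le_sum => i.
by apply: idem_leM2l; exact: (idem_le_bigr add11_ext (fun j : 'I_(size s) => s`_j)).
Qed.

Hypothesis sfL : is_semifield L.
Hypothesis span_s : forall x : L, exists c : nat -> K,
  x = \sum_(i < size s) f (c i) * s`_i.

Lemma idem_le_gen_sum_scalar : exists k : K, idem_le u (f k).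
Proof.
have [a ua] := span_s (u * u).
exists (\sum_(i < size s) a i); apply: idem_le_of_sqr.
  by have [/eqP | /sfL] := boolP (u == 0); [left | right].
by rewrite ua; apply: idem_le_span.
Qed.

End FiniteExtension.

Theorem mainTheorem5 (K L : comPzSemiRingType) (f : {rmorphism K -> L}) :
  is_semifield K -> is_idempotent K -> is_semifield L ->
  injective f -> finite_ext f ->
  archimedean_over f.
Proof.
move=> _ idK sfL _ [s span_s] x.
have [k uk] := idem_le_gen_sum_scalar idK sfL span_s.
have [c ->] := span_s x.
exists ((\sum_(i < size s) c i) * k); rewrite rmorphM.
apply: (idem_le_trans (idem_le_span f idK s c)).
exact: idem_leM2l.
Qed.
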